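(* Let $n \geq 2$ be an integer. Then $R_n^* = S_n T_n$. In particular $$\det R_n^* = M^*(n) = \sum_{k=1}^n \mu^*(k).$$
   Context: For positive integers $i,j$, $i \parallel j$ means $i \mid j$ and $\gcd(i,j/i)=1$. The unitary Möbius function is $\mu^*(m)=(-1)^{\omega(m)}$, with $\omega(m)$ the number of distinct prime factors of $m$. For real $x>0$ and a positive integer $m$, $M^*(x,m) := \sum_{k \leq x,\ \gcd(k,m)=1}\mu^*(k)$ (sum over positive integers $k$), and $M^*(x) := M^*(x,1)$. $R_n^*=(\rho_{ij})_{1\le i,j\le n}$ is the $n\times n$ matrix with $\rho_{ij}=1$ if $i \parallel j$ or $j=1$, and $\rho_{ij}=0$ otherwise. $S_n=(s_{ij})$ is the $n\times n$ matrix with $s_{ij}=1$ if $i\parallel j$ and $0$ otherwise. $T_n=(t_{ij})$ is the $n\times n$ matrix with $t_{i1}=M^*(n/i,i)$ for all $i$, $t_{ii}=1$ for $i\ge 2$, and $t_{ij}=0$ otherwise. *)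

From mathcomp Require Import all_boot all_order all_algebra.
Set Implicit Arguments. Unset Strict Implicit. Unset Printing Implicit Defensive.
Import GRing.Theory Num.Theory.
Local Open Scope ring_scope.

Definition udvd (i j : nat) : bool := (i %| j)%N && coprime i (j %/ i).

Definition mu_star (m : nat) : int := (-1) ^+ size (primes m).

(* M*(x, m) for x = N a natural number (the sum over k <= x only depends on
   floor x): sum over 1 <= k <= N with gcd(k,m)=1 of mu*(k). *)
Definition Mstar (N m : nat) : int :=
  \sum_(1 <= k < N.+1 | coprime k m) mu_star k.

(* Matrices are indexed by 'I_n; index i : 'I_n stands for the integer i+1. *)
Definition Rstar (n : nat) : 'M[int]_n :=
  \matrix_(i < n, j < n)
    (if udvd i.+1 j.+1 || (j.+1 == 1)%N then 1 else 0).

Definition Smat (n : nat) : 'M[int]_n :=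
  \matrix_(i < n, j < n) (if udvd i.+1 j.+1 then 1 else 0).

(* t_{i1} = M*(n/i, i); t_{ii} = 1 for i >= 2; 0 otherwise.
   M*(n/i, i) = Mstar (n %/ i) i since k <= n/i iff k <= floor(n/i). *)
Definition Tmat (n : nat) : 'M[int]_n :=
  \matrix_(i < n, j < n)
    (if (j.+1 == 1)%N then Mstar (n %/ i.+1) i.+1
     else if i == j then 1 else 0).

From mathcomp Require Import all_boot all_order all_algebra.
Set Implicit Arguments. Unset Strict Implicit. Unset Printing Implicit Defensive.
Import GRing.Theory Num.Theory.
Local Open Scope ring_scope.

(* The first column of S_n T_n has entries sum_(i || K <= n) M*(n/K, K).
   Since gcd(l, K) = 1 iff K || K l, M*(n/K, K) is the sum of mu*(N/K) over the
   unitary multiples N <= n of K; exchanging the sums, the entry becomes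
   sum_(N <= n) sum_(i || K || N) mu*(N/K), and the inner sum is [N = i]: when
   N <> i, choose a prime p dividing N/i; multiplying K by, or dividing it by,
   the full power of p in N is a sign-reversing involution of the unitary
   interval between i and N.  The other columns of S_n T_n are those of S_n.
   Finally S_n is unitriangular and T_n is lower triangular with diagonal
   M*(n), 1, ..., 1. *)

Lemma big_sign_involution (R : numDomainType) (I : eqType) (r : seq I)
    (P : pred I) (F : I -> R) (g : I -> I) :
  uniq r -> {subset P <= r} ->
  (forall i, P i -> P (g i)) -> (forall i, P i -> g (g i) = i) ->
  (forall i, P i -> F (g i) = - F i) ->
  \sum_(i <- r | P i) F i = 0.
Proof.
move=> r_uniq Pr Pg gK Fg; rewrite -big_filter; set s := filter P r.
have mem_s i : (i \in s) = P i by rewrite mem_filter andb_idr // => /Pr.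
have s_gs : perm_eq s (map g s).
  apply: uniq_perm; rewrite ?filter_uniq //.
    rewrite map_inj_in_uniq ?filter_uniq // => i j; rewrite !mem_s => Pi Pj gij.
    by rewrite -(gK i Pi) gij gK.
  move=> i; rewrite mem_s; apply/idP/mapP => [Pi | [j]].
    by exists (g i); rewrite ?mem_s ?Pg ?gK.
  by rewrite mem_s => Pj ->; apply: Pg.
apply/eqP; rewrite -eqNr eq_sym; apply/eqP.
rewrite {1}(perm_big _ s_gs) big_map -sumrN.
by apply: eq_big_seq => i; rewrite mem_s => /Fg.
Qed.

Lemma mu_star_coprimeM m n :
  coprime m n -> mu_star (m * n) = mu_star m * mu_star n.
Proof.
have [->|m_gt0] := posnP m; first by rewrite /coprime gcd0n => /eqP->.
have [->|n_gt0] := posnP n; first by rewrite /coprime gcdn0 => /eqP->.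
move=> cmn; rewrite /mu_star -exprD; congr (_ ^+ _).
have : perm_eq (primes (m * n)) (primes m ++ primes n).
  apply: uniq_perm; rewrite ?primes_uniq //.
    by rewrite cat_uniq !primes_uniq andbT -coprime_has_primes.
  by move=> p; rewrite primesM // mem_cat.
by move/perm_size; rewrite size_cat.
Qed.

Lemma mu_star_ppow p a : prime p -> (0 < a)%N -> mu_star (p ^ a) = -1.
Proof. by move=> p_pr a_gt0; rewrite /mu_star primesX // primes_prime. Qed.

Lemma udvdnn m : (0 < m)%N -> udvd m m.
Proof. by move=> m_gt0; rewrite /udvd dvdnn divnn m_gt0 coprimen1. Qed.

Lemma udvd_trans I K N : (0 < I)%N -> udvd I K -> udvd K N -> udvd I N.
Proof.
move=> I_gt0 /andP[IK cI] /andP[KN cK]; rewrite /udvd (dvdn_trans IK KN).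
have -> : (N %/ I = K %/ I * (N %/ K))%N.
  by rewrite divn_mulAC // [(K * _)%N]mulnC divnK.
by rewrite coprimeMr cI (coprime_dvdl IK cK).
Qed.

Lemma Gauss_udvdl I K q : coprime I q -> udvd I (K * q) = udvd I K.
Proof.
move=> cIq; rewrite /udvd Gauss_dvdl //.
by case IK: (I %| K)%N; rewrite //= -divn_mulAC // coprimeMr cIq andbT.
Qed.

Lemma udvd_pmul2r q K M :
  (0 < q)%N -> coprime q M -> udvd (K * q) (M * q) = udvd K M.
Proof.
move=> q_gt0 cqM; rewrite /udvd dvdn_pmul2r //.
case KM: (K %| M)%N; rewrite //= divnMr // coprimeMl.
by rewrite (coprime_dvdr (dvdn_div KM) cqM) andbT.
Qed.

Section PrimePowerToggle.

Variables (p a M : nat).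
Hypotheses (p_pr : prime p) (a_gt0 : (0 < a)%N) (pM : coprime p M).
Local Notation q := (p ^ a)%N.
Local Notation N := (M * q)%N.

Definition ppow_toggle K := if (p %| K)%N then (K %/ q)%N else (K * q)%N.

Let q_gt0 : (0 < q)%N. Proof. by rewrite expn_gt0 prime_gt0. Qed.

Lemma coprime_ppowr m : coprime m q = ~~ (p %| m)%N.
Proof. by rewrite coprime_sym coprime_pexpl // prime_coprime. Qed.

Let coprime_qM : coprime q M. Proof. by rewrite coprime_sym coprime_ppowr -prime_coprime. Qed.

Lemma udvd_ppowP K :
  udvd K N -> exists2 K', udvd K' M & K = K' \/ K = (K' * q)%N.
Proof.
case pK: (p %| K)%N => uKN; last first.
  have cKq : coprime K q by rewrite coprime_ppowr pK.
  by exists K; [rewrite -(Gauss_udvdl _ cKq) | left].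
have /andP[KN cK] := uKN.
have qK : (q %| K)%N.
  have cq : coprime q (N %/ K).
    by rewrite coprime_sym coprime_ppowr -prime_coprime ?(coprime_dvdl pK cK).
  by rewrite -(Gauss_dvdl _ cq) [(K * _)%N]mulnC divnK //; apply: dvdn_mull.
exists (K %/ q)%N; last by right; rewrite divnK.
by rewrite -(udvd_pmul2r _ q_gt0 coprime_qM) divnK.
Qed.

Lemma ppow_toggleP K : udvd K N ->
  [/\ udvd (ppow_toggle K) N, ppow_toggle (ppow_toggle K) = K,
      mu_star (N %/ ppow_toggle K) = - mu_star (N %/ K)
    & forall I, ~~ (p %| I)%N -> udvd I (ppow_toggle K) = udvd I K].
Proof.
case/udvd_ppowP => K' uK'M eK; have /andP[K'M _] := uK'M.
have pK' : ~~ (p %| K')%N by rewrite -prime_coprime ?(coprime_dvdr K'M).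
have togK' : ppow_toggle K' = (K' * q)%N by rewrite /ppow_toggle (negbTE pK').
have togK'q : ppow_toggle (K' * q) = K'.
  by rewrite /ppow_toggle dvdn_mull ?mulnK // -{1}(expn1 p) dvdn_exp2l.
have uK' : udvd K' N by rewrite Gauss_udvdl ?coprime_ppowr.
have uK'q : udvd (K' * q) N by rewrite udvd_pmul2r.
have mu_K' : mu_star (N %/ (K' * q)) = - mu_star (N %/ K').
  have cMK'q : coprime (M %/ K') q.
    by rewrite coprime_ppowr -prime_coprime ?(coprime_dvdr (dvdn_div K'M)).
  by rewrite divnMr // -divn_mulAC // mu_star_coprimeM // mu_star_ppow // mulrN1 opprK.
have uI I : ~~ (p %| I)%N -> udvd I (K' * q) = udvd I K'.
  by move=> pI; rewrite Gauss_udvdl ?coprime_ppowr.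
case: eK => ->; first by rewrite togK' togK'q.
by rewrite togK'q togK' mu_K' opprK; split=> // I /uI ->.
Qed.

End PrimePowerToggle.

Lemma sum_udvd_interval_mu_star I N B : (0 < I)%N -> (0 < N)%N -> (N < B)%N ->
  \sum_(1 <= K < B | udvd I K && udvd K N) mu_star (N %/ K) = (N == I)%:R.
Proof.
move=> I_gt0 N_gt0 NB; have [eNI|NI] := eqVneq N I.
  subst N; rewrite (eq_bigl (pred1 I)).
    by rewrite big_nat1_eq I_gt0 NB divnn I_gt0.
  move=> K; apply/andP/eqP => [[/andP[IK _] /andP[KI _]] | ->].
    by apply/eqP; rewrite eqn_dvd KI IK.
  by rewrite udvdnn.
have [uIN|nuIN] := boolP (udvd I N); last first.
  by rewrite big_pred0 // => K; apply: contraNF nuIN => /andP[/udvd_trans]; apply.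
have /andP[IN cI] := uIN.
have R_gt1 : (1 < N %/ I)%N.
  rewrite ltn_neqAle eq_sym divn_gt0 // (dvdn_leq N_gt0 IN) andbT.
  by apply: contraNneq NI => eR; rewrite -(divnK IN) eR mul1n.
set p := pdiv (N %/ I); have p_pr : prime p by apply: pdiv_prime.
have pI : ~~ (p %| I)%N.
  by rewrite -prime_coprime // coprime_sym (coprime_dvdr (pdiv_dvd _) cI).
have a_gt0 : (0 < logn p N)%N.
  rewrite logn_gt0 mem_primes p_pr N_gt0.
  by apply: dvdn_trans (pdiv_dvd _) (dvdn_div IN).
have [M pM eN] := pfactor_coprime p_pr N_gt0.
set a := logn p N in a_gt0 eN.
rewrite eN; apply: (big_sign_involution (g := ppow_toggle p a)).
- by rewrite iota_uniq.
- move=> K /andP[_ /andP[KN _]]; rewrite -eN in KN.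
  by rewrite mem_index_iota (dvdn_gt0 N_gt0 KN) (leq_ltn_trans (dvdn_leq N_gt0 KN)).
- move=> K /andP[uIK uKN].
  by have [-> _ _ uI] := ppow_toggleP p_pr a_gt0 pM uKN; rewrite uI // uIK.
- by move=> K /andP[_ /(ppow_toggleP p_pr a_gt0 pM)[]].
- by move=> K /andP[_ /(ppow_toggleP p_pr a_gt0 pM)[]].
Qed.

Lemma Mstar_div_udvd K n :
  Mstar (n %/ K) K = \sum_(1 <= N < n.+1 | udvd K N) mu_star (N %/ K).
Proof.
have [->|K_gt0] := posnP K.
  by rewrite divn0 /Mstar big_geq // big_pred0 // => -[].
elim: n => [|n IHn]; first by rewrite div0n /Mstar !big_geq.
rewrite big_mkcond big_nat_recr //= -big_mkcond -IHn /Mstar /udvd divnS //.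
case: (boolP (K %| n.+1)%N) => Kn /=; last by rewrite add0n addr0.
by rewrite add1n big_mkcond big_nat_recr //= -big_mkcond coprime_sym.
Qed.

Lemma sum_udvd_Mstar I n : (0 < I)%N -> (I <= n)%N ->
  \sum_(1 <= K < n.+1 | udvd I K) Mstar (n %/ K) K = 1.
Proof.
move=> I_gt0 In.
under eq_bigr do rewrite Mstar_div_udvd.
rewrite (exchange_big_dep_nat xpredT) //=.
transitivity (\sum_(1 <= N < n.+1 | N == I) 1 : int); last first.
  by rewrite big_nat1_eq I_gt0 ltnS In.
rewrite [RHS]big_mkcond; apply: eq_big_nat => N /andP[N_gt0 Nn].
by rewrite sum_udvd_interval_mu_star //; case: (N == I).
Qed.

Lemma Rstar_factor n : Rstar n = Smat n *m Tmat n.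
Proof.
apply/matrixP => i j; rewrite !mxE; case: j => -[|j] j_lt /=.
  rewrite orbT -(sum_udvd_Mstar (ltn0Sn i) (ltn_ord i)) big_add1 /= big_mkord.
  rewrite big_mkcond /=; apply: eq_bigr => k _; rewrite !mxE /=.
  by case: ifP; rewrite ?mul1r ?mul0r.
rewrite orbF (bigD1 (Ordinal j_lt)) //= big1 ?addr0 => [|k /negbTE kj].
  by rewrite !mxE /= eqxx mulr1.
by rewrite !mxE /= kj mulr0.
Qed.

Lemma det_Smat n : \det (Smat n) = 1.
Proof.
rewrite -det_tr det_trig.
  by rewrite big1 // => i _; rewrite !mxE udvdnn.
apply/is_trig_mxP => i j ij; rewrite !mxE /udvd.
by case: ifP => // /andP[/(dvdn_leq (ltn0Sn _))]; rewrite ltnS leqNgt ij.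
Qed.

Lemma det_Tmat n : (0 < n)%N -> \det (Tmat n) = Mstar n 1.
Proof.
case: n => // n _; rewrite det_trig.
  rewrite big_ord_recl big1 ?mulr1 => [|i _]; first by rewrite !mxE /= divn1.
  by rewrite !mxE /= eqxx.
apply/is_trig_mxP => i j ij; rewrite !mxE /=.
by rewrite eqSS (gtn_eqF (leq_ltn_trans (leq0n i) ij)) -val_eqE (ltn_eqF ij).
Qed.

Theorem theorem2 (n : nat) (hn : (2 <= n)%N) :
  Rstar n = Smat n *m Tmat n /\
  \det (Rstar n) = Mstar n 1 /\
  Mstar n 1 = \sum_(1 <= k < n.+1) mu_star k.
Proof.
split; first exact: Rstar_factor.
split; last by apply: eq_bigl => k; rewrite coprimen1.
by rewrite Rstar_factor det_mulmx det_Smat mul1r det_Tmat // ltnW.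
Qed.
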